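(* Let $V$ and $W$ be subsets of normed spaces over $\mathbb{R}$ or $\mathbb{C}$ with $V$ compact, and let $T:V\to W$ be continuous. (1) There exists a pseudo-inverse $S:W\to V$ of $T$. (2) If moreover $W$ is a Hilbert space, $T$ is injective and $T(V)$ is convex, then $S:=T^{-1}\circ P_{T(V)}:W\to V$, where $P_{T(V)}$ is the metric projection onto $T(V)$ and $T^{-1}:T(V)\to V$ is the inverse of $T$ on its image, is continuous and is the unique pseudo-inverse of $T$ defined on $W$.
   Context: Let $V,W$ be subsets of normed spaces over $\mathbb{R}$ or $\mathbb{C}$ and $T:V\to W$. An operator $S:W\to V$ is a pseudo-inverse of $T$ if: (BAS) for every $w\in W$, the minimum $m_w=\min_{v\in V}\|T(v)-w\|$ is attained, the norm attains its minimum on $\{v\in V:\|T(v)-w\|=m_w\}$, and $S(w)\in\arg\min\{\|v\|:v\in V,\ \|T(v)-w\|=m_w\}$; and (MP2) $S\circ T\circ S=S$. The metric projection onto a nonempty closed convex subset of a Hilbert space maps each point to its unique nearest point in the set. *)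

From HB Require Import structures.
From mathcomp Require Import all_boot all_order all_algebra.
From mathcomp Require Import all_classical all_reals all_analysis.
From mathcomp Require Export complex.
Export Order.TTheory GRing.Theory Num.Theory.

Set Implicit Arguments.
Unset Strict Implicit.
Unset Printing Implicit Defensive.

Local Open Scope ring_scope.
Local Open Scope classical_set_scope.

Definition is_attained_min (K : numFieldType) (X : Type) (A : set X)
    (f : X -> K) (m : K) : Prop :=
  (exists x, A x /\ f x = m) /\ (forall x, A x -> m <= f x).

Definition pseudo_inverse (K : numFieldType) (E F : normedModType K)
    (V : set E) (W : set F) (T : E -> F) (S : F -> E) : Prop :=
  (forall w, W w -> V (S w)) /\
  (forall w, W w ->
     exists m : K,
       is_attained_min V (fun v => `|T v - w|) m /\
       (exists mn : K,
          is_attained_min [set v | V v /\ `|T v - w| = m] (fun v => `|v|) mn) /\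
       (V (S w) /\ `|T (S w) - w| = m) /\
       (forall v, V v -> `|T v - w| = m -> `|S w| <= `|v|)) /\
  (forall w, W w -> S (T (S w)) = S w).

(* [ip] is an inner product on [F] (linear in the first argument,
   [conj]-symmetric, where [conj] is the conjugation of the scalar field),
   inducing the norm of [F]. *)
Definition inner_product_for (K : numFieldType) (conj : K -> K)
    (F : normedModType K) (ip : F -> F -> K) : Prop :=
  (forall (a : K) (x y z : F), ip (a *: x + y) z = a * ip x z + ip y z) /\
  (forall x y : F, ip y x = conj (ip x y)) /\
  (forall x : F, `|x| ^+ 2 = ip x x).

Definition hilbert_space (K : numFieldType) (conj : K -> K)
    (F : completeNormedModType K) : Prop :=
  exists ip : F -> F -> K, inner_product_for conj ip.

Definition metric_projection (K : numFieldType) (F : normedModType K)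
    (C : set F) (P : F -> F) : Prop :=
  forall x, C (P x) /\ (forall y, C y -> `|x - P x| <= `|x - y|).

(* Compactness lets the continuous distance [v |-> `|T v - w|] attain its minimum on
   [V], and the norm attain its minimum on the compact set of minimisers; the
   resulting choice [B] yields the pseudo-inverse [B \o T \o B].  In a Hilbert
   space the parallelogram law makes nearest points of a convex set unique, so
   [Tinv \o P] is the unique best approximation map.  A unique minimiser on a
   compact set depends continuously on the data, and every pseudo-inverse,
   being a best approximation map, must coincide with it. *)

From mathcomp Require Import all_boot all_order all_algebra.
From mathcomp Require Import all_classical all_reals all_analysis.
From mathcomp Require Import complex ring.
Import Order.TTheory GRing.Theory Num.Theory.
Import numFieldNormedType.Exports.
Local Open Scope ring_scope.
Local Open Scope classical_set_scope.
Set Implicit Arguments.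
Unset Strict Implicit.

Section CompactMinimum.
Variable K : numFieldType.

(* Without a least element, the sets [B `&` (< c)] generate a proper filter on
   [B]; a cluster point [p] of it lies in [B], hence has some [q < p] in [B],
   and the ball of radius [p - q] around [p] misses [B `&` (< q)]. *)
Lemma compact_real_min (B : set K) : compact B -> B !=set0 ->
  (forall x, B x -> x \is Num.real) -> exists2 b, B b & forall c, B c -> b <= c.
Proof.
move=> cB [b0 Bb0] Breal; apply: contrapT => nomin.
have below c : B c -> exists2 d, B d & d < c.
  move=> Bc; apply: contrapT => nbelow; apply: nomin; exists c => // d Bd.
  have [//|dc] := real_leP (Breal _ Bc) (Breal _ Bd).
  by exfalso; apply: nbelow; exists d.
pose G := filter_from B (fun c => [set x | B x /\ x < c]).
have PG : ProperFilter G.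
  apply: filter_from_proper; last by move=> i /below[d Bd di]; exists d.
  apply: filter_from_filter; first by exists b0.
  move=> i j Bi Bj; have [ij|ji] := real_leP (Breal _ Bi) (Breal _ Bj).
    by exists i => // x [Bx xi]; do !split => //; exact: lt_le_trans ij.
  by exists j => // x [Bx xj]; do !split => //; exact: lt_trans ji.
have [p [Bp clp]] := cB G PG (ex_intro2 _ _ b0 Bb0 (fun x => @proj1 _ _)).
have [q Bq qp] := below p Bp.
have pq_gt0 : 0 < p - q by rewrite subr_gt0.
have [x [[Bx xq]]] := clp _ _ (ex_intro2 _ _ q Bq (fun x h => h))
  (nbhsx_ballx p _ pq_gt0).
rewrite -ball_normE /= => pxq.
have : p - x < p - q.
  apply: le_lt_trans pxq; apply: real_ler_norm; apply: rpredB; exact: Breal.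
by rewrite ltrD2l ltrN2 => /(lt_trans xq); rewrite ltxx.
Qed.

Variable E : topologicalType.

Lemma compact_argmin (V : set E) (g : E -> K) :
  compact V -> {within V, continuous g} -> (forall x, V x -> g x \is Num.real) ->
  V !=set0 -> exists2 x, V x & forall y, V y -> g x <= g y.
Proof.
move=> cV cg g_real [v0 Vv0]; have gV_real z : (g @` V) z -> z \is Num.real.
  by move=> [y Vy <-]; exact: g_real.
have [_ [x Vx <-] gx_min] := compact_real_min (continuous_compact cg cV)
  (ex_intro _ _ (imageP g Vv0)) gV_real.
by exists x => // y Vy; apply: gx_min; exists y.
Qed.

(* [e] is the gap between [g x0] and the minimum of [g] on the compact set [V `\` U°]. *)
Lemma compact_unique_argmin_nbhs (V : set E) (g : E -> K) (x0 : E) :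
  compact V -> {within V, continuous g} -> (forall x, V x -> g x \is Num.real) ->
  V x0 -> (forall y, V y -> g x0 <= g y) -> (forall y, V y -> g y = g x0 -> y = x0) ->
  forall U, nbhs x0 U -> exists2 e, 0 < e & forall y, V y -> g y < g x0 + e -> U y.
Proof.
move=> cV cg g_real Vx0 x0_min x0_unique U /nbhs_interior Ux0.
have [[k0 Kk0]|Kempty] := pselect ((V `&` ~` U°) !=set0); last first.
  exists 1 => // y Vy _; apply: interior_subset; apply: contrapT => nUy.
  by apply: Kempty; exists y.
have cK : compact (V `&` ~` U°).
  by apply: compact_closedI cV _; apply: open_closedC; exact: open_interior.
have cgK : {within V `&` ~` U°, continuous g}.
  by apply: continuous_subspaceW cg; exact: subIsetl.
have [k [Vk nUk] k_min] :=
  compact_argmin cK cgK (fun y Ky => g_real _ Ky.1) (ex_intro _ k0 Kk0).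
exists (g k - g x0).
  rewrite subr_gt0 lt_neqAle x0_min // andbT; apply/eqP => gk.
  by apply: nUk; rewrite (x0_unique k Vk (esym gk)); exact: nbhs_singleton.
move=> y Vy; rewrite addrC subrK => gyk; apply: interior_subset.
apply: contrapT => nUy.
by have := lt_le_trans gyk (k_min y (conj Vy nUy)); rewrite ltxx.
Qed.

End CompactMinimum.

Lemma compact_setI_preimage (E U : topologicalType) (V : set E) (f : E -> U) (C : set U) :
  compact V -> {within V, continuous f} -> closed C -> compact (V `&` f @^-1` C).
Proof.
move=> cV cf cC.
have cVsub : compact (V : set (subspace V)).
  by move: cV; rewrite -[V]setTI => /compact_subspaceIP; rewrite setTI.
have cfC : closed (f @^-1` C : set (subspace V)).
  by apply: preimage_closed cC => x _; exact: cf.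
have := compact_closedI cVsub cfC.
by rewrite setIC => /compact_subspaceIP; rewrite setIC.
Qed.

Section BestApproximation.
Variables (K : numFieldType) (E F : normedModType K) (V : set E) (T : E -> F).

Definition best_approx (w : F) (v : E) : Prop :=
  V v /\ forall u, V u -> `|T v - w| <= `|T u - w|.

Lemma best_approx_dist_eq (w : F) (u v : E) :
  best_approx w u -> best_approx w v -> `|T u - w| = `|T v - w|.
Proof. by move=> [Vu u_min] [Vv v_min]; apply/le_anti; rewrite u_min ?v_min. Qed.

Lemma best_approx_image (u v : E) : V u -> best_approx (T u) v -> T v = T u.
Proof.
move=> Vu [_ v_min]; apply/eqP; rewrite -subr_eq0 -normr_le0.
by have := v_min u Vu; rewrite subrr normr0.
Qed.

Lemma best_approx_refl (u : E) : V u -> best_approx (T u) u.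
Proof. by move=> Vu; split => // v _; rewrite subrr normr0 normr_ge0. Qed.

Lemma pseudo_inverse_best_approx (W : set F) (S : F -> E) (w : F) :
  pseudo_inverse V W T S -> W w -> best_approx w (S w).
Proof.
move=> [_ [S_BAS _]] Ww; have [m [[_ m_min] [_ [[VSw Sw_m] _]]]] := S_BAS w Ww.
by split=> // v Vv; rewrite Sw_m; exact: m_min.
Qed.

(* (BAS) and (MP2), with the minima [m] and [mn] of (BAS) attained at [S w]. *)
Lemma pseudo_inverseP (W : set F) (S : F -> E) :
  (forall w, W w -> best_approx w (S w)) ->
  (forall w v, W w -> best_approx w v -> `|S w| <= `|v|) ->
  (forall w, W w -> S (T (S w)) = S w) ->
  pseudo_inverse V W T S.
Proof.
move=> S_best S_min_norm S_MP2; split; first by move=> w /S_best[].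
split=> // w Ww; have [VSw Sw_min] := S_best w Ww.
have best_of_eq v : V v -> `|T v - w| = `|T (S w) - w| -> best_approx w v.
  by move=> Vv v_dist; split=> // u Vu; rewrite v_dist; exact: Sw_min.
exists `|T (S w) - w|; split; first by split=> //; exists (S w).
split; last by split=> // v Vv /(best_of_eq v Vv)/(S_min_norm w v Ww).
exists `|S w|; split; first by exists (S w).
by move=> v [Vv /(best_of_eq v Vv)/(S_min_norm w v Ww)].
Qed.

Lemma best_approx_dist_le (w w0 : F) (v v0 : E) : best_approx w v -> V v0 ->
  `|T v - w0| <= `|T v0 - w0| + `|w - w0| *+ 2.
Proof.
move=> [_ v_min] Vv0; rewrite mulr2n addrA.
apply: le_trans (ler_distD w _ _) _; rewrite lerD2r.
apply: le_trans (v_min _ Vv0) _; rewrite [`|w - w0|]distrC; exact: ler_distD.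
Qed.

Lemma unique_best_approx_pseudo_inverse (S : F -> E) :
  (forall w, best_approx w (S w)) -> (forall w v, best_approx w v -> v = S w) ->
  pseudo_inverse V setT T S.
Proof.
move=> S_best S_unique; apply: pseudo_inverseP => [w _|w v _ /S_unique <-|w _] //.
by apply/esym/S_unique/best_approx_refl; case: (S_best w).
Qed.

Lemma pseudo_inverse_unique (S S' : F -> E) :
  (forall w v, best_approx w v -> v = S w) -> pseudo_inverse V setT T S' -> S' = S.
Proof.
move=> S_unique S'_pinv; apply/funext => w; apply/S_unique.
exact: (pseudo_inverse_best_approx S'_pinv).
Qed.

Hypotheses (cV : compact V) (V0 : V !=set0) (cT : {within V, continuous T}).

Lemma dist_continuous (w : F) : {within V, continuous (fun v => `|T v - w|)}.
Proof.
apply: (@within_continuous_comp _ _ _ V T (fun y => `|y - w|)) cT => y _.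
apply: (@continuous_comp _ _ _ (fun y => y - w) Num.norm); last exact: norm_continuous.
by apply: cvgB; [exact: cvg_id | exact: cvg_cst].
Qed.

Lemma exists_best_approx (w : F) : exists v, best_approx w v.
Proof.
have [v Vv v_min] := compact_argmin cV (dist_continuous (w := w))
  (fun v _ => ger0_real (normr_ge0 _)) V0.
by exists v.
Qed.

Lemma exists_min_norm_best_approx (w : F) :
  exists v, best_approx w v /\ forall u, best_approx w u -> `|v| <= `|u|.
Proof.
have [b b_best] := exists_best_approx w.
pose A := V `&` (fun v => `|T v - w|) @^-1` [set `|T b - w|].
have A_best v : A v <-> best_approx w v.
  split=> [[Vv /= v_dist]|v_best].
    by split=> // u Vu; rewrite v_dist; case: b_best => _; exact.
  by split; [case: v_best | exact: best_approx_dist_eq].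
have cA : compact A.
  apply: compact_setI_preimage cV (dist_continuous (w := w)) _.
  exact/accessible_closed_set1/hausdorff_accessible/norm_hausdorff.
have cnorm : {within A, continuous (fun v : E => `|v|)}.
  by apply: continuous_subspaceT; exact: norm_continuous.
have [v Av v_min] := compact_argmin cA cnorm (fun v _ => ger0_real (normr_ge0 _))
  (ex_intro _ b (proj2 (A_best b) b_best)).
by exists v; split=> [|u /A_best]; [exact/A_best | exact: v_min].
Qed.

(* [B \o T \o B] rather than [B]: [B (T u)] is an exact preimage of [T u], so (MP2)
   holds, and it has norm at most [`|u|]. *)
Lemma pseudo_inverse_exists (W : set F) : exists S : F -> E, pseudo_inverse V W T S.
Proof.
have [B B_spec] := choice exists_min_norm_best_approx.
have TB u : V u -> T (B (T u)) = T u by move=> Vu; apply/best_approx_image/(B_spec _).1.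
have VB w : V (B w) by case: (B_spec w) => -[].
pose S w := B (T (B w)).
have TS w : T (S w) = T (B w) by exact: TB.
exists S; apply: pseudo_inverseP.
- by move=> w _; split=> [|u Vu]; [exact: VB | rewrite TS; exact: (B_spec w).1.2].
- move=> w v _ v_best; apply: le_trans ((B_spec w).2 v v_best).
  by apply: (B_spec _).2; exact: best_approx_refl.
- by move=> w _; rewrite /S TS TB.
Qed.

(* The minimiser of the distance to [w0] is unique and compactness makes it
   well posed, while moving [w0] by [r] moves the minimal distance by at most [2 r]. *)
Lemma unique_best_approx_continuous (S : F -> E) :
  (forall w, best_approx w (S w)) -> (forall w v, best_approx w v -> v = S w) ->
  continuous S.
Proof.
move=> S_best S_unique w0 U US; have [VSw0 Sw0_min] := S_best w0.
have dist_eq_unique v : V v -> `|T v - w0| = `|T (S w0) - w0| -> v = S w0.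
  by move=> Vv v_dist; apply: S_unique; split=> // u Vu; rewrite v_dist Sw0_min.
have [e e_gt0 near_min_U] := compact_unique_argmin_nbhs cV (dist_continuous (w := w0))
  (fun v _ => ger0_real (normr_ge0 _)) VSw0 Sw0_min dist_eq_unique US.
have e2_gt0 : 0 < e / 2 by rewrite divr_gt0 ?ltr0n.
apply: filterS (nbhsx_ballx w0 _ e2_gt0) => w; rewrite -ball_normE /= => ww0.
apply: near_min_U; first by case: (S_best w).
apply: le_lt_trans (best_approx_dist_le w0 (S_best w) VSw0) _.
by rewrite ltrD2l distrC -mulr_natr -ltr_pdivlMr ?ltr0n.
Qed.

Lemma exists_metric_projection : exists P : F -> F, metric_projection (T @` V) P.
Proof.
have [P P_best] := choice exists_best_approx.
exists (T \o P) => w; have [VPw Pw_min] := P_best w; split; first exact: imageP.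
by move=> _ [v Vv <-]; rewrite !(distrC w); exact: Pw_min.
Qed.

End BestApproximation.

Lemma convex_set_midpoint (K : numFieldType) (M : lmodType K) (C : set M) (x y : M) :
  convex_set C -> C x -> C y -> C (2^-1 *: (x + y)).
Proof.
move=> cC Cx Cy.
have half_ge0 : 0 <= 2^-1 :> K by rewrite invr_ge0 ler0n.
have half_le1 : 2^-1 <= 1 :> K by rewrite invf_le1 ?ler1n ?ltr0n.
have := cC x y (Itv01 half_ge0 half_le1); rewrite !inE => /(_ Cx Cy).
suff -> : 2^-1 *: (x + y) = conv (Itv01 half_ge0 half_le1) (x : convex_lmodType M) y by [].
change (2^-1 *: (x + y) = 2^-1 *: x + (1 - 2^-1) *: y).
have -> : 1 - 2^-1 = 2^-1 :> K by field.
by rewrite scalerDr.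
Qed.

Section InnerProduct.
Variables (K : numFieldType) (conj : K -> K) (F : normedModType K) (ip : F -> F -> K).
Hypotheses (conjD : {morph conj : a b / a + b}) (ipP : inner_product_for conj ip).

Lemma parallelogram_law (a b : F) :
  `|a + b| ^+ 2 + `|a - b| ^+ 2 = 2 * `|a| ^+ 2 + 2 * `|b| ^+ 2.
Proof.
have [ip_linear [ip_sym ip_norm]] := ipP.
have ipDl x y z : ip (x + y) z = ip x z + ip y z.
  by have := ip_linear 1 x y z; rewrite scale1r mul1r.
have ipDr z x y : ip z (x + y) = ip z x + ip z y by rewrite ip_sym ipDl conjD -!ip_sym.
have ipNl x z : ip (- x) z = - ip x z.
  have ip0l : ip 0 z = 0 by apply: (addrI (ip 0 z)); rewrite -ipDl !addr0.
  by apply: (addrI (ip x z)); rewrite -ipDl !subrr ip0l.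
have ipNr z x : ip z (- x) = - ip z x.
  have ip0r : ip z 0 = 0 by apply: (addrI (ip z 0)); rewrite -ipDr !addr0.
  by apply: (addrI (ip z x)); rewrite -ipDr !subrr ip0r.
by rewrite !ip_norm !ipDl !ipNl !ipDr !ipNr; ring.
Qed.

(* Strict convexity of the norm, via the parallelogram law at the midpoint. *)
Lemma convex_nearest_point_unique (C : set F) (x y1 y2 : F) : convex_set C ->
  C y1 -> C y2 -> (forall z, C z -> `|x - y1| <= `|x - z|) ->
  `|x - y2| = `|x - y1| -> y1 = y2.
Proof.
move=> cC Cy1 Cy2 y1_min d_eq.
have mid_eq : (x - y1) + (x - y2) = 2 *: (x - 2^-1 *: (y1 + y2)).
  by rewrite scalerBr scalerA divff ?pnatr_eq0 // scale1r scaler_nat mulr2n opprD addrACA.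
have := parallelogram_law (x - y1) (x - y2).
have diff_eq : (x - y1) - (x - y2) = y2 - y1 by rewrite opprB addrC addrA subrK.
rewrite mid_eq diff_eq d_eq normrZ ger0_norm ?ler0n //.
set d := `|x - y1|; set A := `|x - _|; set D := `|y2 - y1| => law.
have dA : d <= A by apply: y1_min; exact: convex_set_midpoint.
have D_eq : D ^+ 2 = 4 * (d ^+ 2 - A ^+ 2).
  by apply: (addrI ((2 * A) ^+ 2)); rewrite law; ring.
have D_le0 : D ^+ 2 <= 0.
  by rewrite D_eq pmulr_rle0 ?ltr0n // subr_le0 ler_pXn2r ?nnegrE ?normr_ge0.
have : D ^+ 2 == 0 by rewrite eq_le D_le0 exprn_ge0 ?normr_ge0.
by rewrite expf_eq0 /= normr_eq0 subr_eq0 => /eqP.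
Qed.

End InnerProduct.

Section ProjectionInverse.
Variables (K : numFieldType) (conj : K -> K) (E F : normedModType K) (ip : F -> F -> K).
Hypotheses (conjD : {morph conj : a b / a + b}) (ipP : inner_product_for conj ip).
Variables (V : set E) (T : E -> F) (P : F -> F) (Tinv : F -> E).
Hypotheses (TV_convex : convex_set (T @` V)) (P_proj : metric_projection (T @` V) P).
Hypothesis TinvK : forall v, V v -> Tinv (T v) = v.

Lemma projection_inverse_best_approx (w : F) : best_approx V T w (Tinv (P w)).
Proof.
have [[v Vv Pw] Pw_min] := P_proj w; rewrite -Pw TinvK //.
by split=> // u Vu; rewrite Pw !(distrC _ w); apply: Pw_min; exact: imageP.
Qed.

Lemma projection_inverse_unique (w : F) (v : E) :
  best_approx V T w v -> v = Tinv (P w).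
Proof.
move=> v_best; have [[u Vu Pw] Pw_min] := P_proj w.
have TvE : P w = T v.
  apply: (convex_nearest_point_unique conjD ipP TV_convex _ _ Pw_min).
  - by exists u.
  - by case: v_best => Vv _; exact: imageP.
  have := best_approx_dist_eq v_best (projection_inverse_best_approx w).
  by rewrite -Pw TinvK // Pw !(distrC _ w).
by rewrite TvE TinvK //; case: v_best.
Qed.

End ProjectionInverse.

Lemma pseudo_inverse_projection (K : numFieldType) (conj : K -> K) (E : normedModType K)
    (F : completeNormedModType K) (V : set E) (T : E -> F) :
  {morph conj : a b / a + b} ->
  compact V -> V !=set0 -> {within V, continuous T} -> hilbert_space conj F ->
  convex_set (T @` V) ->
  (exists P : F -> F, metric_projection (T @` V) P) /\
  (forall (P : F -> F) (Tinv : F -> E),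
     metric_projection (T @` V) P -> (forall v, V v -> Tinv (T v) = v) ->
     continuous (Tinv \o P) /\
     pseudo_inverse V setT T (Tinv \o P) /\
     (forall S : F -> E, pseudo_inverse V setT T S -> S = Tinv \o P)).
Proof.
move=> conjD cV V0 cT [ip ipP] TV_convex.
split=> [|P Tinv P_proj TinvK]; first exact: exists_metric_projection.
have S_best := projection_inverse_best_approx P_proj TinvK.
have S_unique := projection_inverse_unique conjD ipP TV_convex P_proj TinvK.
split; first exact: (unique_best_approx_continuous (S := Tinv \o P) cV cT S_best S_unique).
split; first exact: unique_best_approx_pseudo_inverse.
by move=> S; exact: pseudo_inverse_unique.
Qed.

Theorem mainTheorem7 :
  (* (1), real scalars *)
  (forall (R : realType) (E F : normedModType R) (V : set E) (W : set F)
      (T : E -> F),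
     compact V -> V !=set0 -> T @` V `<=` W -> {within V, continuous T} ->
     exists S : F -> E, pseudo_inverse V W T S) /\
  (* (1), complex scalars *)
  (forall (R : realType) (E F : normedModType R[i]) (V : set E) (W : set F)
      (T : E -> F),
     compact V -> V !=set0 -> T @` V `<=` W -> {within V, continuous T} ->
     exists S : F -> E, pseudo_inverse V W T S) /\
  (* (2), real scalars: W = F is a real Hilbert space *)
  (forall (R : realType) (E : normedModType R) (F : completeNormedModType R)
      (V : set E) (T : E -> F),
     compact V -> V !=set0 -> {within V, continuous T} ->
     hilbert_space (fun x : R => x) F ->
     (forall x y, V x -> V y -> T x = T y -> x = y) ->
     convex_set (T @` V) ->
     (exists P : F -> F, metric_projection (T @` V) P) /\
     (forall (P : F -> F) (Tinv : F -> E),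
        metric_projection (T @` V) P ->
        (forall v, V v -> Tinv (T v) = v) ->
        continuous (Tinv \o P) /\
        pseudo_inverse V setT T (Tinv \o P) /\
        (forall S : F -> E, pseudo_inverse V setT T S -> S = Tinv \o P))) /\
  (* (2), complex scalars: W = F is a complex Hilbert space *)
  (forall (R : realType) (E : normedModType R[i]) (F : completeNormedModType R[i])
      (V : set E) (T : E -> F),
     compact V -> V !=set0 -> {within V, continuous T} ->
     hilbert_space (fun x : R[i] => x^*) F ->
     (forall x y, V x -> V y -> T x = T y -> x = y) ->
     convex_set (T @` V) ->
     (exists P : F -> F, metric_projection (T @` V) P) /\
     (forall (P : F -> F) (Tinv : F -> E),
        metric_projection (T @` V) P ->
        (forall v, V v -> Tinv (T v) = v) ->
        continuous (Tinv \o P) /\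
        pseudo_inverse V setT T (Tinv \o P) /\
        (forall S : F -> E, pseudo_inverse V setT T S -> S = Tinv \o P))).
Proof.
split; first by move=> R E F V W T cV V0 _ cT; exact: pseudo_inverse_exists.
split; first by move=> R E F V W T cV V0 _ cT; exact: pseudo_inverse_exists.
split=> R E F V T cV V0 cT F_hilbert _.
  exact: (pseudo_inverse_projection _ cV V0 cT F_hilbert).
apply: (pseudo_inverse_projection _ cV V0 cT F_hilbert) => a b.
exact: rmorphD.
Qed.
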